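(* Let $k \geq 1$ be an integer and let $G=(V,E)$ be a $k$-connected graph with $n \geq 9$ vertices, $e$ edges, minimum degree $\delta$ and maximum degree $\Delta$. If any one of the following five conditions holds, then $G$ is traceable: [1] $$Z_1(G) \geq (n - k - 2)\Delta^2 + \frac{e^2}{2(k + 2)} + \frac{(k + 2) \Delta^3}{2 \delta};$$ [2] $$F(G) \leq (n - k - 2) \delta^3 + \frac{\delta (2 (k + 2)^2 \delta^2 - e^2)}{k + 2};$$ [3] $$F(G) \leq (n - k - 2) \delta^3 + \frac{\delta}{k + 2} \left( 2 (k + 2) \left((k + 2) \delta^2 + \frac{e^2}{n - k - 2}\right) - e^2 - 2 (k + 2) (n - k - 2) \Delta^2\right);$$ [4] $$Inv(G) \leq \frac{n - k - 2}{\Delta} + \frac{2 (k + 2)^2 \delta^2 - e^2}{(k + 2) \Delta^3};$$ [5] $$Inv(G) \leq \frac{n - k - 2}{\Delta} + \frac{1}{(k + 2) \Delta^3} \left( 2 (k + 2) \left((k + 2) \delta^2 + \frac{e^2}{n - k - 2}\right) - e^2 - 2 (k + 2) (n - k - 2) \Delta^2\right).$$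
   Context: Graphs are finite, undirected, without loops or multiple edges. $d(u)$ denotes the degree of vertex $u$; $\delta$ and $\Delta$ are the minimum and maximum degrees. The first Zagreb index is $Z_1(G)=\sum_{u\in V} d(u)^2$, the forgotten topological index is $F(G)=\sum_{u\in V} d(u)^3$, and the inverse degree is $Inv(G)=\sum_{u\in V}\frac{1}{d(u)}$. A graph is traceable if it has a path containing all its vertices. *)

From mathcomp Require Import all_boot all_order all_algebra.
Set Implicit Arguments. Unset Strict Implicit. Unset Printing Implicit Defensive.
Import Order.TTheory GRing.Theory Num.Theory.

Definition simple_graph (T : finType) (g : rel T) : Prop :=
  symmetric g /\ irreflexive g.

Definition deg (T : finType) (g : rel T) (u : T) : nat := #|[set v | g u v]|.

Definition num_edges (T : finType) (g : rel T) : nat :=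
  #|[set A : {set T} | [exists x, [exists y, g x y && (A == [set x; y])]]]|.

(* minimum and maximum degree (for nonempty T; min uses #|T| as neutral,
   which exceeds every degree of a simple graph) *)
Definition min_deg (T : finType) (g : rel T) : nat :=
  \big[minn/#|T|]_(u : T) deg g u.
Definition max_deg (T : finType) (g : rel T) : nat :=
  \max_(u : T) deg g u.

Definition del_rel (T : finType) (g : rel T) (S : {set T}) : rel T :=
  [rel x y | g x y && (x \notin S) && (y \notin S)].

Definition k_connected (T : finType) (g : rel T) (k : nat) : Prop :=
  k < #|T| /\
  forall S : {set T}, #|S| < k ->
    forall x y, x \notin S -> y \notin S -> connect (del_rel g S) x y.

Definition traceable (T : finType) (g : rel T) : Prop :=
  exists (x : T) (p : seq T),
    [/\ uniq (x :: p), (forall v : T, v \in x :: p) & path g x p].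

Local Open Scope ring_scope.

Definition zagreb1 (R : numDomainType) (T : finType) (g : rel T) : R :=
  \sum_(u : T) ((deg g u)%:R ^+ 2).
Definition forgotten (R : numDomainType) (T : finType) (g : rel T) : R :=
  \sum_(u : T) ((deg g u)%:R ^+ 3).
Definition inv_deg (R : numFieldType) (T : finType) (g : rel T) : R :=
  \sum_(u : T) ((deg g u)%:R)^-1.

From mathcomp Require Import all_boot all_order all_algebra.
From mathcomp Require Import zify ring lra.
Set Implicit Arguments. Unset Strict Implicit. Unset Printing Implicit Defensive.
Import Order.TTheory GRing.Theory Num.Theory.

(* Take a longest path P = x0 ... of G.  If some vertex z is not on P, let H
   be the component of z in G - V(P) and N the set of vertices of P with a
   neighbour in H.  N separates H from x0, so #|N| >= k, and by maximality of
   P the successors on P of the vertices of N, together with x0 and z, form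
   an independent set: any edge among them would let P be extended or
   rerouted through H.  This yields an independent set I with #|I| = k + 2.

   For an independent set, sum_(u in I) d(u) <= e <= sum_(u notin I) d(u);
   combined with delta <= d(u) <= Delta, each of the five conditions forces
   Delta = delta and sum_(u in I) d(u) = e.  Then G is regular and bipartite
   with parts I and V \ I, both of size k + 2, so k >= 3 as n >= 9.  This is
   impossible: if P and z cover V, then P alternates between the parts and
   starts in I, so it cannot contain all k + 2 vertices outside I; otherwise
   a second vertex z' off P gives an independent (k + 2)-set through z' and
   x0, which meets each part in at most 2 vertices. *)

Section Sequences.
Variable T : Type.
Implicit Types (g : rel T) (s : seq T).

Lemma sorted_cat_edge g x0 s1 s2 :
  sorted g s1 -> sorted g s2 -> g (last x0 s1) (head x0 s2) ->
  sorted g (s1 ++ s2).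
Proof.
case: s1 => [//|a s1]; case: s2 => [|b s2] /=; first by rewrite cats0.
by move=> p1 p2 e; rewrite cat_path p1 /= e.
Qed.

Lemma sorted_rev_sym g s : symmetric g -> sorted g (rev s) = sorted g s.
Proof. by move=> sg; rewrite rev_sorted; apply: eq_sorted => x y; rewrite sg. Qed.

Lemma last_rev x0 s : last x0 (rev s) = head x0 s.
Proof. by case: s => //= a s; rewrite rev_cons last_rcons. Qed.

End Sequences.

Lemma next_cat (T : eqType) (L R : seq T) v u :
  uniq (L ++ v :: u :: R) -> next (L ++ v :: u :: R) v = u.
Proof.
move=> uLR; have vL : v \notin L.
  by move: uLR; rewrite cat_uniq => /and3P [_ /hasPn /(_ v (mem_head _ _))].
rewrite next_nth mem_cat mem_head orbT index_cat (negbTE vL) /= eqxx addn0.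
case: L {uLR vL} => [|a L] /=; first by [].
by rewrite nth_cat ltnNge leqnSn subSnn.
Qed.

Lemma split_mem (T : eqType) (s : seq T) v :
  v \in s -> exists L R, s = rcons L v ++ R.
Proof. by case/path.splitP => L R; exists L, R. Qed.

Section GraphBasics.
Variables (T : finType) (g : rel T).

Definition indep (A : {set T}) := {in A &, forall u v, ~~ g u v}.

Definition vertex_cover (A : {set T}) :=
  forall u v, g u v -> (u \in A) || (v \in A).

Lemma indep_setC_cover A : vertex_cover A -> indep (~: A).
Proof.
move=> cA u v; rewrite !inE => uA vA; apply/negP => /cA.
by rewrite (negbTE uA) (negbTE vA).
Qed.

Lemma cover_setC_indep A : indep A -> vertex_cover (~: A).
Proof.
move=> iA u v guv; rewrite !inE -negb_and; apply/andP => -[uA vA].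
by move: (iA u v uA vA); rewrite guv.
Qed.

Lemma indep_cover_bipartite A :
  indep A -> vertex_cover A -> forall u v, g u v -> (u \in A) != (v \in A).
Proof.
move=> iA cA u v guv; have := cA u v guv.
case uA: (u \in A); case vA: (v \in A) => //= _.
by move: (iA u v uA vA); rewrite guv.
Qed.

Definition edge_set :=
  [set A : {set T} | [exists x, [exists y, g x y && (A == [set x; y])]]].

Lemma num_edgesE : num_edges g = #|edge_set|. Proof. by []. Qed.

(* Sending an arc (u, v) with u in A to the edge {u, v} is injective when A
   is independent and onto the edge set when A is a vertex cover. *)
Definition arcs (A : {set T}) := [set a : T * T | (a.1 \in A) && g a.1 a.2].

Definition arc_ends (a : T * T) : {set T} := [set a.1; a.2].

Lemma card_arcs A : #|arcs A| = \sum_(u in A) deg g u.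
Proof.
rewrite -sum1_card (eq_bigr (fun u => \sum_(v in [set v | g u v]) 1)) => [|u _]; last first.
  by rewrite sum1_card.
by rewrite pair_big_dep; apply: eq_bigl => -[u v]; rewrite !inE.
Qed.

Lemma arc_ends_edge A : arc_ends @: arcs A \subset edge_set.
Proof.
apply/subsetP => _ /imsetP [[x y] /[!inE] /andP [_ gxy] ->].
by apply/existsP; exists x; apply/existsP; exists y; rewrite gxy eqxx.
Qed.

Lemma indep_arc_ends_inj A : indep A -> {in arcs A &, injective arc_ends}.
Proof.
move=> iA [a b] [a' b'] /[!inE] /andP [aA gab] /andP [a'A ga'b'].
rewrite /arc_ends /= => eab.
have bA : b \notin A by apply: contraL gab => bA; exact: iA.
have b'A : b' \notin A by apply: contraL ga'b' => b'A; exact: iA.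
have /set2P [ea|ea] : a \in [set a'; b'] by rewrite -eab set21.
  have /set2P [eb|eb] : b \in [set a'; b'] by rewrite -eab set22.
    by move: bA; rewrite eb -ea aA.
  by rewrite ea eb.
by move: b'A; rewrite -ea aA.
Qed.

Lemma sum_deg_indep A : indep A -> \sum_(u in A) deg g u <= num_edges g.
Proof.
move=> iA; rewrite -card_arcs num_edgesE -(card_in_imset (indep_arc_ends_inj iA)).
exact/subset_leq_card/arc_ends_edge.
Qed.

Lemma indep_sum_deg_cover A :
  indep A -> \sum_(u in A) deg g u = num_edges g -> vertex_cover A.
Proof.
move=> iA; rewrite -card_arcs num_edgesE -(card_in_imset (indep_arc_ends_inj iA)).
move=> /subset_cardP /(_ (arc_ends_edge A)) eqE u v guv.
have : [set u; v] \in edge_set.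
  by rewrite inE; apply/existsP; exists u; apply/existsP; exists v; rewrite guv eqxx.
rewrite -eqE => /imsetP [[a b] /[!inE] /andP /= [aA _] euv].
have /set2P [<-|<-] : a \in [set u; v] by rewrite euv set21.
  by rewrite aA.
by rewrite aA orbT.
Qed.

Lemma path_del_rel S x q : path (del_rel g S) x q -> path g x q.
Proof. by apply: sub_path => u v /andP [/andP []]. Qed.

Lemma path_del_rel_notin S x q :
  path (del_rel g S) x q -> all (fun v => v \notin S) q.
Proof. by elim: q x => //= a q IH x /andP [/andP [_ ->] /IH]. Qed.

Lemma connect_del_rel_notin S x y :
  connect (del_rel g S) x y -> x \notin S -> y \notin S.
Proof.
move=> /connectP [q /path_del_rel_notin aq ->]; case/lastP: q aq => //= q a.
by rewrite all_rcons last_rcons => /andP [].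
Qed.

Hypotheses (sg : symmetric g) (ig : irreflexive g).

Lemma del_rel_sym S : symmetric (del_rel g S).
Proof. by move=> x y; rewrite /del_rel /= sg -!andbA [(x \notin S) && _]andbC. Qed.

Lemma sum_deg_cover A : vertex_cover A -> num_edges g <= \sum_(u in A) deg g u.
Proof.
move=> cA; rewrite -card_arcs num_edgesE.
apply: leq_trans (leq_imset_card arc_ends _); apply/subset_leq_card/subsetP => B.
rewrite inE => /existsP [x /existsP [y /andP [gxy /eqP ->]]].
case/orP: (cA x y gxy) => [xA|yA]; apply/imsetP.
  by exists (x, y); rewrite ?inE /= ?xA ?gxy.
by exists (y, x); rewrite ?inE /= ?yA 1?sg ?gxy // /arc_ends setUC.
Qed.

Lemma min_deg_le u : min_deg g <= deg g u.
Proof.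
rewrite /min_deg; elim: (index_enum T) (mem_index_enum u) => // a r IH.
rewrite big_cons inE => /predU1P [->|/IH]; first exact: geq_minl.
exact: leq_trans (geq_minr _ _).
Qed.

Lemma min_deg_le_card : min_deg g <= #|T|.
Proof. by rewrite /min_deg; elim/big_rec: _ => // i m _ hm; rewrite geq_min hm orbT. Qed.

Lemma deg_le_max u : deg g u <= max_deg g.
Proof. exact: leq_bigmax. Qed.

Lemma min_deg_geq m : m <= #|T| -> (forall u, m <= deg g u) -> m <= min_deg g.
Proof.
move=> mT mdeg; rewrite /min_deg; elim/big_ind: _ => // a b ma mb.
by rewrite leq_min ma mb.
Qed.

Lemma k_connected_deg k : k_connected g k -> forall u, k <= deg g u.
Proof.
move=> [kT hk] u; rewrite leqNgt; apply/negP => Nk.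
set N := [set v | g u v] in Nk.
have /subsetPn [y _] : ~~ ([set: T] \subset u |: N).
  apply: contraL kT => /subset_leq_card; rewrite cardsT -leqNgt => TN.
  by apply: leq_trans TN _; rewrite cardsU1 -/(deg g u); case: (u \in N); lia.
rewrite in_setU1 => /norP [yu yN].
have uN : u \notin N by rewrite inE ig.
have /connectP [[|a q] /=] := hk N Nk u y uN yN.
  by move=> _ eyu; rewrite eyu eqxx in yu.
by move=> /andP [/andP [/andP [gua _]]]; rewrite inE gua.
Qed.

Lemma card_indep_setI (A B : {set T}) x :
  indep A -> x \in A -> [set v | g x v] \subset B -> #|A :&: B| + deg g x <= #|B|.
Proof.
move=> iA xA NB; have : A :&: B \subset B :\: [set v | g x v].
  by apply/subsetP => v /setIP [vA vB]; rewrite !inE vB andbT iA.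
by move/subset_leq_card; rewrite cardsD (setIidPr NB) /deg; have := subset_leq_card NB; lia.
Qed.

Lemma count_bipartite_path (P : pred T) x p :
  (forall u v, g u v -> P u != P v) -> path g x p ->
  count (predC P) (x :: p) <= count P (x :: p) + ~~ P x.
Proof.
move=> alt; elim: p x => [|y p IH] x /=; first by case: (P x).
move=> /andP [/alt Pxy /IH]; move: Pxy => /=.
by case: (P x); case: (P y) => //= _; lia.
Qed.

Lemma balanced_of_sum_deg A :
  0 < min_deg g -> max_deg g = min_deg g -> indep A ->
  \sum_(u in A) deg g u = num_edges g -> vertex_cover A /\ #|~: A| = #|A|.
Proof.
move=> dpos Dd iA sA; have cA := indep_sum_deg_cover iA sA; split => //.
have reg u : deg g u = min_deg g by apply/eqP; rewrite eqn_leq min_deg_le -Dd deg_le_max.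
have := sum_deg_indep (indep_setC_cover cA); have := sum_deg_cover (cover_setC_indep iA).
by rewrite -sA !(eq_bigr _ (fun u _ => reg u)) !sum_nat_const; nia.
Qed.

End GraphBasics.

Lemma count_uniq_card (T : finType) (s : seq T) (P : pred T) :
  uniq s -> count P s = #|[set v in s | P v]|.
Proof.
move=> us; rewrite -size_filter -(card_uniqP (filter_uniq P us)).
by apply: eq_card => v; rewrite mem_filter !inE andbC.
Qed.

Lemma exists_set_between (T : finType) (C A : {set T}) m :
  C \subset A -> #|C| <= m <= #|A| ->
  exists B : {set T}, [/\ C \subset B, B \subset A & #|B| = m].
Proof.
move=> CA /andP [Cm mA].
have : m - #|C| <= #|A :\: C| by rewrite cardsD (setIidPr CA); lia.
case/card_geqP => b [ub sb bAC].
exists (C :|: [set v in b]); split; first exact: subsetUl.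
  by rewrite subUset CA; apply/subsetP => v; rewrite inE => /bAC /setDP [].
rewrite cardsU; have -> : C :&: [set v in b] = set0.
  by apply/setP => v; rewrite !inE; apply/andP => -[vC /bAC]; rewrite inE vC.
by rewrite cards0 cardsE (card_uniqP ub) sb; lia.
Qed.

Section LongestPath.
Variables (T : finType) (g : rel T).
Hypotheses (sg : symmetric g) (ig : irreflexive g).

Definition longest (s : seq T) :=
  forall s', uniq s' -> sorted g s' -> size s' <= size s.

Lemma exists_longest (x : T) :
  exists x0 p, [/\ uniq (x0 :: p), path g x0 p & longest (x0 :: p)].
Proof.
pose P m := [exists t : m.-tuple T, uniq t && sorted g t].
have P1 : P 1 by apply/existsP; exists [tuple x].
have Pmax m : P m -> m <= #|T|.
  by case/existsP => t /andP [ut _]; rewrite -(size_tuple t) -(card_uniqP ut) max_card.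
have [m /existsP [[[|x0 p] /= /eqP szt]]] := ex_maxnP (ex_intro P 1 P1) Pmax.
  by move=> _ /(_ 1 P1); rewrite -szt.
move=> /andP [ut st] maxm.
exists x0, p; split => // s' us' ss'; rewrite /= szt; apply: maxm.
by apply/existsP; exists (in_tuple s'); rewrite us' ss'.
Qed.

Variables (x0 : T) (p : seq T).
Local Notation s := (x0 :: p).
Hypotheses (us : uniq s) (ss : path g x0 p) (ls : longest s).

Lemma longest_splice Q s' :
  sorted g s' -> perm_eq s' (Q ++ s) -> uniq (Q ++ s) -> Q = [::].
Proof.
move=> ss' ps uQs; have us' : uniq s' by rewrite (perm_uniq ps).
by move: (ls us' ss'); rewrite (perm_size ps) size_cat; case: Q {ps uQs} => //= a Q; lia.
Qed.

Lemma prev_head : prev s x0 = last x0 p.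
Proof.
have x0p : x0 \notin p by case/andP: us.
by rewrite prev_nth mem_head /= (memNindex x0p) -[last x0 p]/(last x0 s) -nth_last.
Qed.

Section Component.
Variables (z : T) (zs : z \notin s).

Let H := [set u | connect (del_rel g [set v in s]) z u].
Let N := [set v in s | [exists y in H, g v y]].

Lemma z_in_H : z \in H. Proof. by rewrite inE connect0. Qed.

Lemma H_notin u : u \in H -> u \notin s.
Proof.
by rewrite inE => /connect_del_rel_notin; rewrite !inE; apply.
Qed.

Lemma H_step u a : u \in H -> g u a -> a \notin s -> a \in H.
Proof.
move=> Hu gua as_; have := Hu; rewrite !inE => /connect_trans; apply.
by apply: connect1; rewrite /del_rel /= gua !inE H_notin.
Qed.

Lemma H_path y y' : y \in H -> y' \in H ->
  exists q, [/\ path g y q, last y q = y' & uniq ((y :: q) ++ s)].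
Proof.
move=> Hy Hy'; have := Hy; have := Hy'; rewrite !inE => zy' zy.
have : connect (del_rel g [set v in s]) y y'.
  by apply: connect_trans _ zy'; rewrite (sym_connect_sym (del_rel_sym sg _)).
case/connectP => q pq ->; case: (shortenP pq) => q' pq' uq' _.
exists q'; split=> //; first exact: path_del_rel pq'.
rewrite cat_uniq uq' us andbT has_sym -all_predC /= H_notin //=.
by apply: sub_all (path_del_rel_notin pq') => v; rewrite inE.
Qed.

Lemma N_sub v : v \in N -> v \in s.
Proof. by rewrite inE => /andP []. Qed.

Lemma N_adj v : v \in N -> exists2 y, y \in H & g v y.
Proof. by rewrite inE => /andP [_ /existsP [y /andP [Hy gvy]]]; exists y. Qed.

Lemma nadj_head y : y \in H -> ~~ g x0 y.
Proof.
move=> Hy; apply/negP => gx0y; suff : [:: y] = [::] by [].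
apply: (@longest_splice _ (y :: s)) => /=.
- by rewrite sg gx0y.
- by rewrite perm_refl.
- by rewrite H_notin.
Qed.

Lemma nadj_last y : y \in H -> ~~ g (last x0 p) y.
Proof.
move=> Hy; apply/negP => gly; suff : [:: y] = [::] by [].
apply: (@longest_splice _ (rcons s y)).
- by rewrite /= rcons_path ss gly.
- by rewrite perm_rcons perm_refl.
- by rewrite /= H_notin.
Qed.

(* [next s] reads P as a cycle, but a vertex of N is never the last vertex
   of P, so no wrap-around to x0 occurs. *)
Lemma N_next v L R : v \in N -> s = rcons L v ++ R -> exists R', R = next s v :: R'.
Proof.
move=> Nv; case: R => [|u R] def_s; last first.
  by exists R; rewrite def_s cat_rcons next_cat // -cat_rcons -def_s.
have [y Hy gvy] := N_adj Nv; move: (nadj_last Hy).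
suff -> : last x0 p = v by rewrite gvy.
by rewrite -[last x0 p]/(last x0 s) def_s cats0 last_rcons.
Qed.

Lemma N_split v : v \in N -> exists L R, s = rcons L v ++ next s v :: R.
Proof.
move=> Nv; have [L [R def_s]] := split_mem (N_sub Nv).
by have [R' eR] := N_next Nv def_s; exists L, R'; rewrite -eR.
Qed.

Lemma nadj_next_H v y' : v \in N -> y' \in H -> ~~ g (next s v) y'.
Proof.
move=> Nv Hy'; have [y Hy gvy] := N_adj Nv; have [q [pq lq uq]] := H_path Hy Hy'.
have [L [R]] := N_split Nv; move: (next s v) => nv def_s.
apply/negP => gny; suff : y :: q = [::] by [].
apply: (@longest_splice _ (rcons L v ++ (y :: q) ++ nv :: R)) => //.
  have /cat_sorted2 [sL sR] : sorted g (rcons L v ++ nv :: R) by rewrite -def_s.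
  apply: (sorted_cat_edge (x0 := x0)) sL _ _; last by rewrite last_rcons.
  by apply: (sorted_cat_edge (x0 := x0) (s1 := y :: q)) pq sR _; rewrite /= lq sg.
by rewrite def_s perm_catCA perm_refl.
Qed.

Lemma nadj_head_next v : v \in N -> ~~ g x0 (next s v).
Proof.
move=> Nv; have [y Hy gvy] := N_adj Nv; have [L [R]] := N_split Nv.
move: (next s v) => nv def_s; apply/negP => gx0n; suff : [:: y] = [::] by [].
have hL : head x0 (rcons L v) = x0 by case: L def_s => [|a L] [->].
apply: (@longest_splice _ (y :: rev (rcons L v) ++ nv :: R)).
- have /cat_sorted2 [sL sR] : sorted g (rcons L v ++ nv :: R) by rewrite -def_s.
  apply: (sorted_cat_edge (x0 := x0) (s1 := [:: y])) => //; last by rewrite rev_rcons /= sg.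
  apply: (sorted_cat_edge (x0 := x0)); rewrite ?sorted_rev_sym //.
  by rewrite last_rev hL.
- by rewrite def_s /= perm_cons perm_cat2r perm_rev perm_refl.
- by rewrite /= H_notin.
Qed.

Lemma nadj_next_after v w L R :
  v \in N -> w \in N -> s = rcons L v ++ R -> w \in R -> ~~ g (next s v) (next s w).
Proof.
move=> Nv Nw def_s wR; have [y Hy gvy] := N_adj Nv; have [y' Hy' gwy'] := N_adj Nw.
have [q [pq lq uq]] := H_path Hy Hy'.
have [M [R2 defR]] := split_mem wR; subst R.
have [R' eR2] : exists R', R2 = next s w :: R'.
  by apply: (N_next (L := rcons L v ++ M) Nw); rewrite def_s rcons_cat catA.
have [R'' eR] := N_next Nv def_s; subst R2.
have hM : head x0 (rcons M w) = next s v by move: eR; case: (M) => [|m M1] [->].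
move: (next s v) (next s w) hM def_s => nv nw hM def_s {eR}.
apply/negP => gnn; suff : y :: q = [::] by [].
apply: (@longest_splice _ (rcons L v ++ (y :: q) ++ rev (rcons M w) ++ nw :: R')) => //.
  have /cat_sorted2 [sL /cat_sorted2 [sM sR]] :
    sorted g (rcons L v ++ rcons M w ++ nw :: R') by rewrite -def_s.
  apply: (sorted_cat_edge (x0 := x0)) sL _ _; last by rewrite last_rcons.
  apply: (sorted_cat_edge (x0 := x0) (s1 := y :: q)) pq _ _; last by rewrite /= lq rev_rcons sg.
  by apply: (sorted_cat_edge (x0 := x0)); rewrite ?sorted_rev_sym // last_rev hM.
by rewrite def_s perm_catCA !perm_cat2l perm_cat2r perm_rev perm_refl.
Qed.

Lemma nadj_next v w : v \in N -> w \in N -> ~~ g (next s v) (next s w).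
Proof.
move=> Nv Nw; have [L [R def_s]] := split_mem (N_sub Nv).
have : w \in rcons L v ++ R by rewrite -def_s N_sub.
rewrite mem_cat mem_rcons inE => /orP [/predU1P [->|wL]|wR]; first by rewrite ig.
  have [L1 [L2 defL]] := split_mem wL; rewrite sg.
  apply: (nadj_next_after Nw Nv (L := L1) (R := rcons L2 v ++ R)).
    by rewrite def_s defL rcons_cat catA.
  by rewrite mem_cat mem_rcons mem_head.
exact: nadj_next_after Nv Nw def_s wR.
Qed.

Lemma k_le_card_N k : k_connected g k -> k <= #|N|.
Proof.
case=> _ hk; rewrite leqNgt; apply/negP => Nk.
have x0N : x0 \notin N.
  by apply/negP => /N_adj [y Hy]; apply/negP; exact: nadj_head.
have zN : z \notin N by rewrite inE (negbTE zs).
have /connectP [q pq ex0] := hk N Nk z x0 zN x0N.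
suff : last z q \in H by rewrite -ex0 => /H_notin; rewrite mem_head.
elim: q z pq z_in_H {ex0} => [|a q IH] u //= /andP [/andP [/andP [gua _] aN] pq] Hu.
apply: IH pq (H_step Hu gua _); apply: contra aN => as_.
by rewrite inE as_; apply/existsP; exists u; rewrite Hu sg.
Qed.

Lemma longest_indep k : k_connected g k ->
  exists I : {set T},
    [/\ indep g I, z \in I, x0 \in I, I \subset z |: [set v in s] & k.+2 <= #|I|].
Proof.
move=> hk; have next_inj : injective (next s) := can_inj (prev_next us).
have x0nN : x0 \notin next s @: N.
  apply/imsetP => -[v Nv ex0]; have [y Hy gvy] := N_adj Nv.
  have ev : last x0 p = v by rewrite -prev_head -[v](prev_next us) -ex0.
  by move: (nadj_last Hy); rewrite ev gvy.
have znN : z \notin x0 |: next s @: N.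
  rewrite in_setU1 negb_or; apply/andP; split.
    by apply: contraNneq zs => ->; rewrite mem_head.
  by apply: contra zs => /imsetP [v Nv ->]; rewrite mem_next N_sub.
exists (z |: (x0 |: next s @: N)); split.
- move=> u v; rewrite !in_setU1.
  case/predU1P => [->|/predU1P [->|/imsetP [a Na ->]]];
    case/predU1P => [->|/predU1P [->|/imsetP [b Nb ->]]].
  + by rewrite ig.
  + by rewrite sg; exact: nadj_head z_in_H.
  + by rewrite sg; exact: nadj_next_H z_in_H.
  + exact: nadj_head z_in_H.
  + by rewrite ig.
  + exact: nadj_head_next.
  + exact: nadj_next_H z_in_H.
  + by rewrite sg; exact: nadj_head_next.
  + exact: nadj_next.
- exact: setU11.
- by rewrite !in_setU1 eqxx orbT.
- apply/subsetP => u; rewrite !in_setU1 inE.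
  case/predU1P => [->|/predU1P [->|/imsetP [a Na ->]]]; rewrite ?eqxx ?mem_head ?orbT //.
  by rewrite mem_next N_sub ?orbT.
- by rewrite !cardsU1 znN x0nN card_imset //= add1n add1n ltnS ltnS k_le_card_N.
Qed.

End Component.

Lemma longest_cover_contra k h I :
  k_connected g k -> 3 <= k -> h \notin s -> indep g I -> vertex_cover g I ->
  h \in I -> x0 \in I -> I \subset h |: [set v in s] ->
  #|I| = k.+2 -> #|~: I| = k.+2 -> False.
Proof.
move=> hk k3 hs iI cI hI x0I IS cardI cardJ.
case: (boolP [forall v, (v \in s) || (v == h)]) => [/forallP sh|/forallPn [z]].
  pose P v := v \in I.
  have := count_bipartite_path (P := P) (indep_cover_bipartite iI cI) ss.
  rewrite /P x0I addn0 => cnt.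
  have cJ : #|~: I| <= count (predC P) s.
    rewrite count_uniq_card //; apply/subset_leq_card/subsetP => v.
    rewrite !inE /P => vI; rewrite vI andbT.
    by case/orP: (sh v) => // /eqP vh; move: vI; rewrite vh hI.
  have cI' : count P s <= #|I :\ h|.
    rewrite count_uniq_card //; apply/subset_leq_card/subsetP => v.
    rewrite !inE /P => /andP [vs ->]; rewrite andbT.
    by apply: contraNneq hs => <-.
  have := leq_trans cJ (leq_trans cnt cI').
  by have := cardsD1 h I; rewrite hI cardI cardJ; lia.
rewrite negb_or => /andP [zs zh].
have [Iz [iIz zIz x0Iz _ cardIz]] := longest_indep zs hk.
have zI : z \notin I by apply: contra zs => /(subsetP IS); rewrite !inE (negbTE zh).
have NzI : [set v | g z v] \subset I.
  by apply/subsetP => v; rewrite inE => /cI; rewrite (negbTE zI).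
have Nx0J : [set v | g x0 v] \subset ~: I.
  by apply/subsetP => v; rewrite !inE => gx0v; apply: contraL gx0v; exact: iI.
have cz := card_indep_setI iIz zIz NzI; have cx0 := card_indep_setI iIz x0Iz Nx0J.
have dz := k_connected_deg ig hk z; have dx0 := k_connected_deg ig hk x0.
have cIz := cardsID I Iz; rewrite setDE cardI cardJ in cz cx0 cIz.
by clear -cz cx0 dz dx0 cIz cardIz k3; lia.
Qed.

End LongestPath.

Lemma traceable_or_indep (T : finType) (g : rel T) k :
  symmetric g -> irreflexive g -> k_connected g k -> 9 <= #|T| ->
  traceable g \/ exists I : {set T},
    [/\ indep g I, #|I| = k.+2 & ~ (vertex_cover g I /\ #|~: I| = k.+2)].
Proof.
move=> sg ig hk n9; have /card_gt0P [x _] : 0 < #|T| by apply: leq_trans n9.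
have [x0 [p [us ss ls]]] := exists_longest g x.
case: (boolP [forall v, v \in x0 :: p]) => [/forallP sp|/forallPn [h hs]].
  by left; exists x0, p.
right; have [Ih [iIh hIh x0Ih IhS cardIh]] := longest_indep sg ig us ss ls hs hk.
have hx0 : [set h; x0] \subset Ih by rewrite subUset !sub1set hIh x0Ih.
have [|I [hx0I IIh cardI]] := exists_set_between (m := k.+2) hx0.
  by rewrite cardIh andbT cards2; case: (h != x0).
have /subsetP hx0I' := hx0I.
have iI : indep g I := sub_in2 (subsetP IIh) iIh.
exists I; split => // -[cI cardJ].
have k3 : 3 <= k by move: n9; rewrite -(cardsC I) cardI cardJ; lia.
apply: (longest_cover_contra sg ig us ss ls hk k3 hs iI cI) => //.
- by apply: hx0I'; rewrite !inE eqxx.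
- by apply: hx0I'; rewrite !inE eqxx orbT.
- exact: subset_trans IIh IhS.
Qed.

Local Open Scope ring_scope.

Section EqualityCases.
Variable R : realFieldType.

(* Applied with K = #|I| = k + 2, m = n - k - 2, dl = delta, dh = Delta and
   s the degree sum over the independent set I. *)
Definition degree_chain (K m dl dh e s : R) :=
  [/\ 0 < K, 0 < dl <= dh, K * dl <= s <= e & e <= m * dh].

Lemma zagreb_eq_case K m dl dh e s (Z : R) :
  degree_chain K m dl dh e s ->
  Z <= dh * s + m * dh ^+ 2 ->
  m * dh ^+ 2 + e ^+ 2 / (2 * K) + K * dh ^+ 3 / (2 * dl) <= Z ->
  dh = dl /\ e = s.
Proof.
case=> K0 /andP [dl0 dldh] /andP [Ks se] _ hZ hC.
have dh0 : 0 < dh := lt_le_trans dl0 dldh.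
have c0 : 0 < 2 * K * dl by rewrite -mulrA mulr_gt0 ?mulr_gt0.
have key : dl * e ^+ 2 + K ^+ 2 * dh ^+ 3 <= 2 * K * dl * dh * s.
  have : (e ^+ 2 / (2 * K) + K * dh ^+ 3 / (2 * dl)) * (2 * K * dl) <= dh * s * (2 * K * dl).
    by rewrite ler_pM2r //; lra.
  have -> : (e ^+ 2 / (2 * K) + K * dh ^+ 3 / (2 * dl)) * (2 * K * dl)
          = dl * e ^+ 2 + K ^+ 2 * dh ^+ 3 by field; rewrite !gt_eqF.
  by move=> h; lra.
have t1 : 0 <= dl * (e - K * dh) ^+ 2 by rewrite mulr_ge0 ?sqr_ge0 ?ltW.
have t2 : 0 <= (K * dh) ^+ 2 * (dh - dl) by rewrite mulr_ge0 ?sqr_ge0 ?subr_ge0.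
have t3 : 0 <= 2 * K * dl * dh * (e - s) by rewrite mulr_ge0 ?subr_ge0 // ltW // mulr_gt0.
have split3 : dl * (e - K * dh) ^+ 2 + (K * dh) ^+ 2 * (dh - dl) + 2 * K * dl * dh * (e - s)
              = dl * e ^+ 2 + K ^+ 2 * dh ^+ 3 - 2 * K * dl * dh * s by ring.
have p2 : 0 < (K * dh) ^+ 2 by rewrite exprn_gt0 // mulr_gt0.
have p3 : 0 < 2 * K * dl * dh by rewrite mulr_gt0.
split; apply/eqP; rewrite eq_le ?dldh ?se andbT -subr_le0.
  by rewrite -(pmulr_rle0 _ p2); lra.
by rewrite -(pmulr_rle0 _ p3); lra.
Qed.

Lemma forgotten_eq_case K m dl dh e s (F Y : R) :
  degree_chain K m dl dh e s -> Y <= 2 * K ^+ 2 * dl ^+ 2 - e ^+ 2 ->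
  dl ^+ 2 * s + m * dl ^+ 3 + (dh - dl) <= F -> F <= m * dl ^+ 3 + dl / K * Y ->
  dh = dl /\ e = s.
Proof.
case=> K0 /andP [dl0 dldh] /andP [Ks se] _ hY hF hC.
have Kdl0 : 0 <= K * dl by rewrite mulr_ge0 ?ltW.
have h1 : K * (dl ^+ 2 * s + (dh - dl)) <= dl * (2 * K ^+ 2 * dl ^+ 2 - e ^+ 2).
  have -> : dl * (2 * K ^+ 2 * dl ^+ 2 - e ^+ 2) = K * (dl / K * (2 * K ^+ 2 * dl ^+ 2 - e ^+ 2)).
    by field; rewrite gt_eqF.
  have hY' : dl / K * Y <= dl / K * (2 * K ^+ 2 * dl ^+ 2 - e ^+ 2).
    by rewrite ler_wpM2l // divr_ge0 ?ltW.
  by apply: ler_wpM2l; [exact: ltW | lra].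
have hs := ler_wpM2l (mulr_ge0 (ltW K0) (sqr_ge0 dl)) Ks.
have he2 : (K * dl) ^+ 2 <= e ^+ 2 by rewrite ler_sqr ?nnegrE //; lra.
have he := ler_wpM2l (ltW dl0) he2.
have z1 : K * (dh - dl) <= 0 by lra.
have t1 : 0 <= K * (dh - dl) by apply: mulr_ge0; [exact: ltW | rewrite subr_ge0].
have z2 : K * dl ^+ 2 * (s - K * dl) <= 0 by lra.
have z3 : dl * (e ^+ 2 - (K * dl) ^+ 2) <= 0 by lra.
rewrite pmulr_rle0 // subr_le0 in z1; rewrite pmulr_rle0 ?mulr_gt0 ?exprn_gt0 // subr_le0 in z2.
rewrite pmulr_rle0 // subr_le0 ler_sqr ?nnegrE // in z3; last by lra.
by split; apply/eqP; rewrite eq_le ?dldh ?se andbT //; lra.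
Qed.

Lemma inv_eq_case K m dl dh e s (Iv Y : R) :
  degree_chain K m dl dh e s -> Y <= 2 * K ^+ 2 * dl ^+ 2 - e ^+ 2 ->
  (K + m) / dh <= Iv -> Iv <= m / dh + Y / (K * dh ^+ 3) ->
  dh = dl /\ e = s.
Proof.
case=> K0 /andP [dl0 dldh] /andP [Ks se] _ hY hI hC.
have dh0 : 0 < dh := lt_le_trans dl0 dldh.
have c0 : 0 < K * dh ^+ 3 by rewrite mulr_gt0 ?exprn_gt0.
have h1 : (K * dh) ^+ 2 <= Y.
  have : K / dh * (K * dh ^+ 3) <= Y / (K * dh ^+ 3) * (K * dh ^+ 3).
    by rewrite ler_pM2r //; rewrite mulrDl in hI; lra.
  have -> : K / dh * (K * dh ^+ 3) = (K * dh) ^+ 2 by field; rewrite gt_eqF.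
  by rewrite mulfVK ?gt_eqF.
have Kdl0 : 0 <= K * dl by rewrite mulr_ge0 // ltW.
have e0 : 0 <= e by lra.
have he2 : (K * dl) ^+ 2 <= e ^+ 2 by rewrite ler_sqr ?nnegrE //; lra.
have hdh : dh <= dl.
  have : (K * dh) ^+ 2 <= (K * dl) ^+ 2 by lra.
  by rewrite ler_sqr ?nnegrE ?mulr_ge0 ?ler_pM2l // ltW.
have edh : dh = dl by apply/eqP; rewrite eq_le hdh dldh.
split => //; rewrite edh in h1.
have : e ^+ 2 <= (K * dl) ^+ 2 by lra.
by rewrite ler_sqr ?nnegrE // => hes; apply/eqP; rewrite eq_le se; lra.
Qed.

Lemma quad_le K m dl dh e s :
  degree_chain K m dl dh e s ->
  2 * K * (K * dl ^+ 2 + e ^+ 2 / m) - e ^+ 2 - 2 * K * m * dh ^+ 2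
    <= 2 * K ^+ 2 * dl ^+ 2 - e ^+ 2.
Proof.
case=> K0 /andP [dl0 dldh] /andP [Ks se] em.
have dh0 : 0 < dh := lt_le_trans dl0 dldh.
have e0 : 0 <= e by have := mulr_gt0 K0 dl0; lra.
have m0 : 0 < m by rewrite -(pmulr_lgt0 _ dh0); have := mulr_gt0 K0 dl0; lra.
have hm : e ^+ 2 / m <= m * dh ^+ 2.
  have -> : m * dh ^+ 2 = (m * dh) ^+ 2 / m by field; rewrite gt_eqF.
  by rewrite ler_pM2r ?invr_gt0 // ler_sqr ?nnegrE //; lra.
have hK : 2 * K * (e ^+ 2 / m) <= 2 * K * (m * dh ^+ 2).
  by apply: ler_wpM2l hm; rewrite mulr_ge0 // ltW.
lra.
Qed.

End EqualityCases.

Lemma sum_split_setC (V : nmodType) (T : finType) (A : {set T}) (F : T -> V) :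
  \sum_u F u = \sum_(u in A) F u + \sum_(u in ~: A) F u.
Proof. by rewrite (bigID (mem A)) /=; congr (_ + _); apply: eq_bigl => u; rewrite inE. Qed.

Lemma cube_ge (R : realDomainType) (a x : R) :
  1 <= a <= x -> a ^+ 2 * x + (x - a) <= x ^+ 3.
Proof.
case/andP => a1 ax; have : 0 <= (x - a) * (x * (x + a) - 1).
  by apply: mulr_ge0; [rewrite subr_ge0 | nra].
lra.
Qed.

Section DegreeSums.
Variables (R : realFieldType) (T : finType) (g : rel T).
Local Notation d := ((min_deg g)%:R : R).
Local Notation D := ((max_deg g)%:R : R).

Lemma sum_deg_ge (A : {set T}) : #|A|%:R * d <= \sum_(u in A) (deg g u)%:R.
Proof. by rewrite mulr_natl -sumr_const; apply: ler_sum => u _; rewrite ler_nat min_deg_le. Qed.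

Lemma sum_deg_le (A : {set T}) : \sum_(u in A) (deg g u)%:R <= #|A|%:R * D.
Proof. by rewrite mulr_natl -sumr_const; apply: ler_sum => u _; rewrite ler_nat deg_le_max. Qed.

Lemma zagreb1_le (A : {set T}) :
  zagreb1 R g <= D * \sum_(u in A) (deg g u)%:R + #|~: A|%:R * D ^+ 2.
Proof.
rewrite /zagreb1 (sum_split_setC A) mulr_sumr mulr_natl -sumr_const.
apply: lerD; apply: ler_sum => u _; first by rewrite expr2 ler_wpM2r ?ler_nat ?deg_le_max.
by rewrite -!natrX ler_nat leq_exp2r ?deg_le_max.
Qed.

(* The summand D - d, contributed by a vertex of maximum degree, is what
   forces regularity in the equality case. *)
Lemma forgotten_ge (A : {set T}) : (0 < min_deg g)%N ->
  d ^+ 2 * \sum_(u in A) (deg g u)%:R + #|~: A|%:R * d ^+ 3 + (D - d) <= forgotten R g.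
Proof.
move=> dpos; have d1 : 1 <= d by rewrite ler1n.
have dx u : d <= (deg g u)%:R by rewrite ler_nat min_deg_le.
have hA : d ^+ 2 * \sum_(u in A) (deg g u)%:R + \sum_(u in A) ((deg g u)%:R - d)
          <= \sum_(u in A) (deg g u)%:R ^+ 3.
  by rewrite mulr_sumr -big_split; apply: ler_sum => u _; apply: cube_ge; rewrite d1 dx.
have hC : #|~: A|%:R * d ^+ 3 + \sum_(u in ~: A) ((deg g u)%:R - d)
          <= \sum_(u in ~: A) (deg g u)%:R ^+ 3.
  rewrite mulr_natl -sumr_const -big_split /=; apply: ler_sum => u _.
  have hx : d ^+ 2 * (deg g u)%:R + ((deg g u)%:R - d) <= (deg g u)%:R ^+ 3.
    by apply: cube_ge; rewrite d1 dx.
  have hd : d ^+ 3 <= d ^+ 2 * (deg g u)%:R.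
    by rewrite exprSr; apply: ler_wpM2l; rewrite ?exprn_ge0 ?dx // (le_trans ler01 d1).
  lra.
have T0 : (0 < #|T|)%N := leq_trans dpos (min_deg_le_card g).
have [u0 Du0] : {u0 | max_deg g = deg g u0} := bigop.eq_bigmax (deg g) T0.
have hD : D - d <= \sum_u ((deg g u)%:R - d).
  rewrite (bigD1 u0) //= Du0 lerDl sumr_ge0 // => v _.
  by rewrite subr_ge0.
rewrite (sum_split_setC A) in hD; rewrite /forgotten (sum_split_setC A); lra.
Qed.

Lemma inv_deg_ge : (0 < min_deg g)%N -> #|T|%:R / D <= inv_deg R g.
Proof.
move=> dpos; have xpos u : 0 < (deg g u)%:R :> R.
  by rewrite ltr0n (leq_trans dpos) ?min_deg_le.
rewrite /inv_deg mulrC mulr_natr -sumr_const; apply: ler_sum => u _.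
by rewrite lef_pV2 ?posrE ?ler_nat ?deg_le_max // (lt_le_trans (xpos u)) ?ler_nat ?deg_le_max.
Qed.

Lemma indep_degree_chain (I : {set T}) :
  symmetric g -> (0 < min_deg g)%N -> (0 < #|I|)%N -> indep g I ->
  degree_chain #|I|%:R #|~: I|%:R d D (num_edges g)%:R (\sum_(u in I) (deg g u)%:R).
Proof.
move=> sg dpos I0 iI; have /card_gt0P [x _] := leq_trans dpos (min_deg_le_card g).
split.
- by rewrite ltr0n.
- by rewrite ltr0n dpos ler_nat (leq_trans (min_deg_le g x) (deg_le_max g x)).
- by rewrite sum_deg_ge -natr_sum ler_nat sum_deg_indep.
- apply: le_trans _ (sum_deg_le (~: I)).
  by rewrite -natr_sum ler_nat (sum_deg_cover sg (cover_setC_indep iI)).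
Qed.

End DegreeSums.

Theorem theorem3 (R : realFieldType) (T : finType) (g : rel T) (k : nat) :
  simple_graph g -> (1 <= k)%N -> k_connected g k -> (9 <= #|T|)%N ->
  let n : R := (#|T|)%:R in
  let kk : R := k%:R in
  let e : R := (num_edges g)%:R in
  let d : R := (min_deg g)%:R in
  let D : R := (max_deg g)%:R in
  (zagreb1 R g >= (n - kk - 2) * D ^+ 2 + e ^+ 2 / (2 * (kk + 2))
                     + (kk + 2) * D ^+ 3 / (2 * d)) \/
     (
      forgotten R g <= (n - kk - 2) * d ^+ 3
                     + d * (2 * (kk + 2) ^+ 2 * d ^+ 2 - e ^+ 2) / (kk + 2)) \/
     (
      forgotten R g <= (n - kk - 2) * d ^+ 3
                     + d / (kk + 2) * (2 * (kk + 2) * ((kk + 2) * d ^+ 2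
                         + e ^+ 2 / (n - kk - 2)) - e ^+ 2
                         - 2 * (kk + 2) * (n - kk - 2) * D ^+ 2)) \/
     (inv_deg R g <= (n - kk - 2) / D
                     + (2 * (kk + 2) ^+ 2 * d ^+ 2 - e ^+ 2) / ((kk + 2) * D ^+ 3)) \/
     (inv_deg R g <= (n - kk - 2) / D
                     + ((kk + 2) * D ^+ 3)^-1 * (2 * (kk + 2) * ((kk + 2) * d ^+ 2
                         + e ^+ 2 / (n - kk - 2)) - e ^+ 2
                         - 2 * (kk + 2) * (n - kk - 2) * D ^+ 2)) ->
  traceable g.
Proof.
move=> [sg ig] k1 hk n9 n kk e d D conds.
have [//|[I [iI cardI balI]]] := traceable_or_indep sg ig hk n9.
have dpos : (0 < min_deg g)%N.
  exact: leq_trans k1 (min_deg_geq (ltnW hk.1) (k_connected_deg ig hk)).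
have I0 : (0 < #|I|)%N by rewrite cardI.
have chain := indep_degree_chain R sg dpos I0 iI.
have cardIR : #|I|%:R = kk + 2 :> R by rewrite cardI -addn2 natrD.
have cardJR : #|~: I|%:R = n - kk - 2 :> R.
  by rewrite /n -(cardsC I) natrD cardIR; ring.
have cardTR : #|T|%:R = #|I|%:R + #|~: I|%:R :> R by rewrite -natrD cardsC.
have hInv : (#|I|%:R + #|~: I|%:R) / D <= inv_deg R g by rewrite -cardTR inv_deg_ge.
rewrite -cardIR -cardJR in conds.
have [Dd es] : D = d /\ e = \sum_(u in I) (deg g u)%:R.
  case: conds => [c|[c|[c|[c|c]]]].
  - exact: zagreb_eq_case chain (zagreb1_le _ _ _) c.
  - by apply: forgotten_eq_case chain (lexx _) (forgotten_ge _ _ dpos) _; rewrite mulrAC.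
  - exact: forgotten_eq_case chain (quad_le chain) (forgotten_ge _ _ dpos) c.
  - exact: inv_eq_case chain (lexx _) hInv c.
  - by apply: inv_eq_case chain (quad_le chain) hInv _; rewrite [_ / (_ * D ^+ 3)]mulrC.
have [cI cardJ] : vertex_cover g I /\ #|~: I| = #|I|.
  apply: (balanced_of_sum_deg sg dpos _ iI).
    by apply/eqP; rewrite -(eqr_nat R); apply/eqP.
  by apply/eqP; rewrite -(eqr_nat R) natr_sum; apply/eqP; rewrite -es.
by case: balI; rewrite -cardI.
Qed.
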